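(* Let $j$ be a divisor of $n$ with $1\le j\le n-1$, and let $0\leq i\leq n-1$. If $\gcd(i,n)=\gcd(i,j)$, or $\gcd(i,n)$ divides $j$, then there exists $N\geq 0$ with $c_i^N\in R_jA$.
   Context: $\Bbbk$ is an algebraically closed field of characteristic zero, $n\ge2$, $A=\Bbbk_{-1}[x_0,\dots,x_{n-1}]$ is generated by degree-one $x_0,\dots,x_{n-1}$ with $x_ix_j=-x_jx_i$ ($i\ne j$), $C_n=\langle\sigma\rangle$ acts by $\sigma(x_i)=x_{i+1}$ (indices in $\mathbb{Z}_n$). Let $\omega$ be a primitive $n$th root of unity, $b_\gamma=\frac1n\sum_{i=0}^{n-1}\omega^{i\gamma}x_i$, and $c_k=b_lb_{k-l}+b_{k-l}b_l$ (independent of $l$) for $k\in\mathbb{Z}_n$. $R_j=\{a\in A\mid\sigma(a)=\omega^{-j}a\}$ and $R_jA$ is the right ideal of $A$ generated by $R_j$. Here $\gcd(0,n)=n$. *)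

From HB Require Import structures.
From mathcomp Require Import all_boot all_order all_algebra.
Set Implicit Arguments. Unset Strict Implicit. Unset Printing Implicit Defensive.
Import GRing.Theory.
Local Open Scope ring_scope.

(* The skew polynomial ring A = k_{-1}[x_0,...,x_{n-1}] is modelled as the
   twisted monoid algebra of N^n: an element is its coefficient function on
   ordered monomials x^a = x_0^{a_0} x_1^{a_1} ... x_{n-1}^{a_{n-1}}
   (a PBW basis of A).  Elements of A are the finitely supported ones. *)

Definition mon (n : nat) := {ffun 'I_n -> nat}.
Definition elt (K : Type) (n : nat) := mon n -> K.

Definition finsupp (K : fieldType) (n : nat) (f : elt K n) : Prop :=
  exists s : seq (mon n), forall c, c \notin s -> f c = 0.

(* x^a x^b = sgn a b x^(a+b), sgn a b = (-1)^(sum_{i>k} a_i b_k) *)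
Definition sgn (K : fieldType) (n : nat) (a b : mon n) : K :=
  (-1) ^+ (\sum_(i < n) \sum_(k < n | (k < i)%N) a i * b k)%N.

Definition msub (n : nat) (c a : mon n) : mon n := [ffun i => c i - a i]%N.

Definition ord2nat (n m : nat) (a : {ffun 'I_n -> 'I_m}) : mon n :=
  [ffun i => nat_of_ord (a i)].

Definition mul (K : fieldType) (n : nat) (f g : elt K n) : elt K n :=
  fun c =>
    \sum_(a : {ffun 'I_n -> 'I_(\sum_(i < n) c i)%N.+1} |
            [forall i, (a i <= c i)%N])
      @sgn K n (ord2nat a) (msub c (ord2nat a)) * f (ord2nat a)
        * g (msub c (ord2nat a)).

Definition one (K : fieldType) (n : nat) : elt K n :=
  fun c => if c == [ffun _ => 0%N] then 1 else 0.

Definition pw (K : fieldType) (n : nat) (f : elt K n) (N : nat) : elt K n :=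
  iter N (mul f) (@one K n).

Definition xv (K : fieldType) (n : nat) (i : 'I_n) : elt K n :=
  fun c => if c == [ffun k => nat_of_bool (k == i)] then 1 else 0.

(* The automorphism sigma with sigma(x_i) = x_{i+1}.  On ordered monomials,
   sigma(x^a) = (-1)^(c_0 (c_1+...+c_{n-1})) x^c where c_k = a_{k-1}; hence
   sigma(f)(c) = (-1)^(c_0 (c_1+...+c_{n-1})) f(a) with a_k = c_{k+1}. *)
Definition sigma (K : fieldType) (n : nat) (f : elt K n) : elt K n :=
  fun c =>
    (-1) ^+ ((\sum_(k < n | val k == 0%N) c k) *
             (\sum_(k < n | val k != 0%N) c k))%N
    * f [ffun k => c (ordS k)].

Definition bb (K : fieldType) (n : nat) (w : K) (g : nat) : elt K n :=
  fun c => (n%:R)^-1 * \sum_(i < n) w ^+ (i * g) * @xv K n i c.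

(* c_k = b_l b_{k-l} + b_{k-l} b_l, taken with l = 0 *)
Definition cc (K : fieldType) (n : nat) (w : K) (k : nat) : elt K n :=
  fun c => mul (@bb K n w 0) (@bb K n w k) c + mul (@bb K n w k) (@bb K n w 0) c.

Definition inR (K : fieldType) (n : nat) (w : K) (j : nat) (f : elt K n) : Prop :=
  finsupp f /\ forall c, sigma f c = (w ^+ j)^-1 * f c.

Definition inRA (K : fieldType) (n : nat) (w : K) (j : nat) (f : elt K n) : Prop :=
  exists (m : nat) (r a : nat -> elt K n),
    (forall k, (k < m)%N -> inR w j (r k) /\ finsupp (a k)) /\
    forall c, f c = \sum_(k < m) mul (r k) (a k) c.

From Pilot Require Import Defs.
From HB Require Import structures.
From mathcomp Require Import all_boot all_order all_algebra.
From mathcomp Require Import ring zify.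
Set Implicit Arguments. Unset Strict Implicit. Unset Printing Implicit Defensive.
Import GRing.Theory.
Local Open Scope ring_scope.

(* The automorphism sigma of A is multiplicative, so its
   eigenvectors are closed under products: if sigma(f) = mu f and
   sigma(g) = nu g then sigma(fg) = mu nu fg.  Each b_gamma is an eigenvector
   with eigenvalue omega^{-gamma}, hence c_i = b_0 b_i + b_i b_0 has
   eigenvalue omega^{-i} and c_i^N has eigenvalue omega^{-iN}.  Since
   gcd(i,n) divides j (both hypotheses of the theorem give this), Bezout
   provides N with iN = j mod n; then c_i^N lies in R_j itself, hence in the
   right ideal R_j A as c_i^N * 1.
   The file first works out how sigma acts on ordered monomials (a rotation
   of exponent vectors twisted by a sign) and derives that sigma is
   multiplicative; then it develops eigenvectors of sigma, finite support,
   the unit law, and the arithmetic of primitive roots; the theorem is last. *)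

Definition rot_mon n (x : mon n) : mon n := [ffun k => x (ordS k)].

Definition sigma_exp n (x : mon n) : nat :=
  ((\sum_(k < n | val k == 0%N) x k) * (\sum_(k < n | val k != 0%N) x k))%N.

Definition inv_count n (a b : mon n) : nat :=
  (\sum_(i < n) \sum_(k < n | (k < i)%N) a i * b k)%N.

Lemma sigmaE (K : fieldType) n (f : elt K n) c :
  sigma f c = (-1) ^+ sigma_exp c * f (rot_mon c).
Proof. by []. Qed.

Lemma sum_rot_mon n (c : mon n) :
  (\sum_(i < n) rot_mon c i = \sum_(i < n) c i)%N.
Proof.
rewrite [RHS](reindex_inj (@ordS_inj n)) /=.
by apply: eq_bigr => i _; rewrite ffunE.
Qed.

Section SignCocycle.
Variable m : nat.

Definition inv_count_tail (a b : mon m.+1) : nat :=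
  (\sum_(i < m) \sum_(k < m | (k < i)%N) a (lift ord0 i) * b (lift ord0 k))%N.

Lemma ordS_max : ordS (@ord_max m) = ord0.
Proof. by apply: val_inj => /=; rewrite modnn. Qed.

Lemma ordS_widen (i : 'I_m) : ordS (widen_ord (leqnSn m) i) = lift ord0 i.
Proof. by apply: val_inj => /=; rewrite modn_small // ltnS. Qed.

Lemma sigma_exp_split (x : mon m.+1) :
  sigma_exp x = (x ord0 * \sum_(k < m) x (lift ord0 k))%N.
Proof.
rewrite /sigma_exp big_mkcond big_ord_recl /= big1 ?addn0 //; congr (_ * _)%N.
by rewrite big_mkcond big_ord_recl /=.
Qed.

Lemma inv_count_split (a b : mon m.+1) :
  inv_count a b =
  ((\sum_(i < m) a (lift ord0 i)) * b ord0 + inv_count_tail a b)%N.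
Proof.
rewrite /inv_count /inv_count_tail big_ord_recl /= big_pred0 // add0n.
rewrite big_distrl -big_split /=.
apply: eq_bigr => i _; rewrite big_mkcond big_ord_recl /=; congr (_ + _)%N.
by rewrite [RHS]big_mkcond; apply: eq_bigr => k _ /=; rewrite ltnS.
Qed.

(* After rotation, x_0 becomes the last variable. *)
Lemma inv_count_rot (a b : mon m.+1) :
  inv_count (rot_mon a) (rot_mon b) =
  (inv_count_tail a b + a ord0 * \sum_(k < m) b (lift ord0 k))%N.
Proof.
rewrite /inv_count /inv_count_tail big_ord_recr /=; congr (_ + _)%N.
  apply: eq_bigr => i _.
  rewrite big_mkcond big_ord_recr /= ltnNge ltnW //= addn0.
  rewrite [RHS]big_mkcond; apply: eq_bigr => k _ /=.
  by rewrite !ffunE !ordS_widen.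
rewrite big_distrr big_mkcond big_ord_recr /= ltnn addn0.
by apply: eq_bigr => k _; rewrite ltn_ord !ffunE ordS_max ordS_widen.
Qed.

(* The sign exponents satisfy the cocycle identity up to an even number. *)
Lemma sign_exponent_rot (a b c : mon m.+1) :
  (forall k, c k = (a k + b k)%N) ->
  (sigma_exp c + inv_count (rot_mon a) (rot_mon b) =
   inv_count a b + (sigma_exp a + sigma_exp b)
   + 2 * (a ord0 * \sum_(k < m) b (lift ord0 k)))%N.
Proof.
move=> cE; rewrite inv_count_rot inv_count_split !sigma_exp_split cE.
have -> : (\sum_(k < m) c (lift ord0 k) =
   \sum_(k < m) a (lift ord0 k) + \sum_(k < m) b (lift ord0 k))%N.
  by rewrite -big_split; apply: eq_bigr => k _; rewrite cE.
ring.
Qed.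

(* Hence sigma(x^a) sigma(x^b) and sigma(x^a x^b) carry the same sign. *)
Lemma sgn_rot (K : fieldType) (a b c : mon m.+1) :
  (forall k, c k = (a k + b k)%N) ->
  (-1) ^+ sigma_exp c * @sgn K _ (rot_mon a) (rot_mon b) =
  @sgn K _ a b * ((-1) ^+ sigma_exp a * (-1) ^+ sigma_exp b).
Proof.
move=> cE; have sqN1 : (-1 : K) ^+ 2 = 1 by rewrite expr2 mulN1r opprK.
rewrite /sgn -!exprD -/(inv_count _ _) -/(inv_count a b) sign_exponent_rot //.
by rewrite exprD exprM sqN1 expr1n mulr1 addnA.
Qed.

End SignCocycle.

(* sigma is multiplicative: reindex the convolution by the rotation. *)
Lemma sigma_mul (K : fieldType) m (f g : elt K m.+1) c :
  sigma (Defs.mul f g) c = Defs.mul (sigma f) (sigma g) c.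
Proof.
rewrite sigmaE /Defs.mul sum_rot_mon mulr_sumr.
set S := (\sum_(i < m.+1) c i)%N.
have rot_bij : bijective (fun a : {ffun 'I_m.+1 -> 'I_S.+1} =>
                            [ffun k => a (ordS k)]).
  exists (fun a : {ffun 'I_m.+1 -> 'I_S.+1} => [ffun k => a (ord_pred k)]).
    by move=> a; apply/ffunP => k; rewrite !ffunE ord_predK.
  by move=> a; apply/ffunP => k; rewrite !ffunE ordSK.
rewrite (reindex _ (onW_bij _ rot_bij)); apply: eq_big => a.
  apply/forallP/forallP => le_ac i; last by rewrite !ffunE; apply: le_ac.
  by have := le_ac (ord_pred i); rewrite !ffunE ord_predK.
move/forallP => le_ac.
have -> : ord2nat [ffun k => a (ordS k)] = rot_mon (ord2nat a).
  by apply/ffunP => k; rewrite !ffunE.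
have -> : msub (rot_mon c) (rot_mon (ord2nat a)) = rot_mon (msub c (ord2nat a)).
  by apply/ffunP => k; rewrite !ffunE.
rewrite !sigmaE.
transitivity ((-1) ^+ sigma_exp c
   * sgn K (rot_mon (ord2nat a)) (rot_mon (msub c (ord2nat a)))
   * f (rot_mon (ord2nat a)) * g (rot_mon (msub c (ord2nat a)))).
  by rewrite !mulrA.
rewrite (@sgn_rot _ K (ord2nat a) (msub c (ord2nat a)) c); first ring.
move=> k; rewrite !ffunE subnKC //.
by have := le_ac (ord_pred k); rewrite !ffunE ord_predK.
Qed.

Definition sigma_eigen (K : fieldType) n (mu : K) (f : elt K n) : Prop :=
  forall c, sigma f c = mu * f c.

Lemma mul_ext (K : fieldType) n (f1 f2 g1 g2 : elt K n) c :
  (forall x, f1 x = f2 x) -> (forall x, g1 x = g2 x) ->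
  Defs.mul f1 g1 c = Defs.mul f2 g2 c.
Proof. by move=> Ef Eg; apply: eq_bigr => a _; rewrite Ef Eg. Qed.

Lemma mul_scale (K : fieldType) n (f g : elt K n) (mu nu : K) c :
  Defs.mul (fun x => mu * f x) (fun x => nu * g x) c = mu * nu * Defs.mul f g c.
Proof. rewrite /Defs.mul mulr_sumr; apply: eq_bigr => a _; ring. Qed.

Lemma sigma_eigen_mul (K : fieldType) m (f g : elt K m.+1) mu nu :
  sigma_eigen mu f -> sigma_eigen nu g -> sigma_eigen (mu * nu) (Defs.mul f g).
Proof. by move=> Ef Eg c; rewrite sigma_mul -mul_scale; apply: mul_ext. Qed.

Lemma sigma_eigen_add (K : fieldType) n (f g : elt K n) mu :
  sigma_eigen mu f -> sigma_eigen mu g -> sigma_eigen mu (fun c => f c + g c).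
Proof.
move=> Ef Eg c; have := Ef c; have := Eg c; rewrite !sigmaE => Eg' Ef'.
by rewrite mulrDr Ef' Eg' mulrDr.
Qed.

Lemma sigma_eigen_one (K : fieldType) n : sigma_eigen 1 (@Defs.one K n).
Proof.
move=> c; rewrite sigmaE mul1r /Defs.one.
have [->|c_ne0] := eqVneq c [ffun _ => 0%N].
  have -> : rot_mon [ffun _ : 'I_n => 0%N] = [ffun _ => 0%N].
    by apply/ffunP => k; rewrite !ffunE.
  by rewrite eqxx mulr1 /sigma_exp big1 ?mul0n ?expr0 // => k _; rewrite ffunE.
case: eqP => [rot0|_]; last by rewrite mulr0.
case/eqP: c_ne0; apply/ffunP => k.
by have := congr1 (fun x : mon n => x (ord_pred k)) rot0; rewrite !ffunE ord_predK.
Qed.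

Lemma sigma_eigen_pw (K : fieldType) m (f : elt K m.+1) mu N :
  sigma_eigen mu f -> sigma_eigen (mu ^+ N) (pw f N).
Proof.
move=> Ef; elim: N => [|N IH]; first by rewrite expr0; apply: sigma_eigen_one.
by rewrite exprS; apply: sigma_eigen_mul.
Qed.

Definition unit_mon n (i : 'I_n) : mon n := [ffun k => nat_of_bool (k == i)].

Lemma rot_mon_unit n (c : mon n) i :
  (rot_mon c == unit_mon i) = (c == unit_mon (ordS i)).
Proof.
apply/eqP/eqP => [rotE|->]; last first.
  by apply/ffunP => k; rewrite !ffunE (inj_eq (@ordS_inj n)).
apply/ffunP => k; have := congr1 (fun x : mon n => x (ord_pred k)) rotE.
by rewrite !ffunE ord_predK -(inj_eq (@ordS_inj n)) ord_predK.
Qed.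

Lemma sigma_exp_unit m (p : 'I_m.+1) : sigma_exp (unit_mon p) = 0%N.
Proof.
rewrite sigma_exp_split !ffunE; case: eqP => [<-|] //=.
by rewrite big1 ?muln0 // => k _; rewrite ffunE eq_sym (negbTE (neq_lift _ _)).
Qed.

Lemma sigma_eigen_bb (K : fieldType) m (w : K) g :
  m.+1.-primitive_root w -> sigma_eigen ((w ^+ g)^-1) (@bb K m.+1 w g).
Proof.
move=> hw c; rewrite sigmaE /bb mulrCA [RHS]mulrCA; congr (_ * _).
rewrite !mulr_sumr [RHS](reindex_inj (@ordS_inj m.+1)) /=.
apply: eq_bigr => i _.
have -> : (-1) ^+ sigma_exp c * (w ^+ (i * g) * xv K i (rot_mon c)) =
          w ^+ (i * g) * xv K (ordS i) c.
  rewrite /xv -/(unit_mon i) -/(unit_mon (ordS i)) rot_mon_unit mulrCA.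
  case: eqP => [->|_]; last by rewrite !mulr0.
  by rewrite sigma_exp_unit expr0 mul1r.
have w_neq0 : w != 0.
  apply/negP => /eqP w0; have := prim_expr_order hw.
  by rewrite w0 expr0n /= => /eqP; rewrite eq_sym oner_eq0.
rewrite mulrA; congr (_ * _).
rewrite -[w ^+ (_ %% _ * g)](prim_expr_mod hw) modnMml (prim_expr_mod hw).
by rewrite mulSn exprD mulrA mulVf ?mul1r // expf_neq0.
Qed.

Lemma sigma_eigen_cc (K : fieldType) m (w : K) k :
  m.+1.-primitive_root w -> sigma_eigen ((w ^+ k)^-1) (@cc K m.+1 w k).
Proof.
move=> hw; have b0k := sigma_eigen_mul (sigma_eigen_bb 0 hw) (sigma_eigen_bb k hw).
have bk0 := sigma_eigen_mul (sigma_eigen_bb k hw) (sigma_eigen_bb 0 hw).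
rewrite expr0 invr1 mul1r in b0k; rewrite expr0 invr1 mulr1 in bk0.
exact: sigma_eigen_add b0k bk0.
Qed.

Lemma finsupp_mul (K : fieldType) n (f g : elt K n) :
  finsupp f -> finsupp g -> finsupp (Defs.mul f g).
Proof.
move=> [s fs] [t gs].
exists [seq ([ffun i => x i + y i]%N : mon n) | x : mon n <- s, y : mon n <- t].
move=> c c_out; apply: big1 => a /forallP le_ac.
have [a_in|a_out] := boolP (ord2nat a \in s); last by rewrite fs // mulr0 mul0r.
have [b_in|b_out] := boolP (msub c (ord2nat a) \in t); last by rewrite gs // mulr0.
case/negP: c_out.
have -> : c = [ffun i => ord2nat a i + msub c (ord2nat a) i]%N.
  by apply/ffunP => i; rewrite !ffunE subnKC // le_ac.
exact: (allpairs_f (fun x y : mon n => [ffun i => x i + y i]%N)).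
Qed.

Lemma finsupp_add (K : fieldType) n (f g : elt K n) :
  finsupp f -> finsupp g -> finsupp (fun c => f c + g c).
Proof.
move=> [s fs] [t gs]; exists (s ++ t) => c.
by rewrite mem_cat negb_or => /andP[cs ct]; rewrite fs // gs // addr0.
Qed.

Lemma finsupp_one (K : fieldType) n : finsupp (@Defs.one K n).
Proof. by exists [:: [ffun _ => 0%N]] => c; rewrite inE /Defs.one => /negbTE ->. Qed.

Lemma finsupp_pw (K : fieldType) n (f : elt K n) N :
  finsupp f -> finsupp (pw f N).
Proof.
move=> fs; elim: N => [|N IH]; first exact: finsupp_one.
exact: finsupp_mul.
Qed.

Lemma finsupp_cc (K : fieldType) n (w : K) k : finsupp (@cc K n w k).
Proof.
have fs_bb g : finsupp (@bb K n w g).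
  exists [seq unit_mon i | i <- enum 'I_n] => c c_out.
  rewrite /bb big1 ?mulr0 // => i _.
  rewrite /xv -/(unit_mon i); case: eqP => [cE|_]; last by rewrite mulr0.
  by case/negP: c_out; rewrite cE; apply: map_f; rewrite mem_enum.
by apply: finsupp_add; apply: finsupp_mul.
Qed.

(* 1 is a right unit: only the splitting c = c + 0 contributes. *)
Lemma mul_one_r (K : fieldType) n (f : elt K n) c :
  Defs.mul f (@Defs.one K n) c = f c.
Proof.
rewrite /Defs.mul; set S := (\sum_(i < n) c i)%N.
have c_lt i : (c i < S.+1)%N by rewrite ltnS /S (bigD1 i) //= leq_addr.
pose a0 : {ffun 'I_n -> 'I_S.+1} := [ffun i => inord (c i)].
have a0E : ord2nat a0 = c by apply/ffunP => i; rewrite !ffunE inordK.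
have le_a0 : [forall i, (a0 i <= c i)%N].
  by apply/forallP => i; rewrite ffunE inordK.
rewrite (bigD1 a0) //= big1 ?addr0.
  rewrite a0E.
  have -> : msub c c = [ffun _ => 0%N] by apply/ffunP => i; rewrite !ffunE subnn.
  rewrite /Defs.one eqxx mulr1 /sgn big1 ?expr0 ?mul1r // => i _.
  by rewrite big1 // => k _; rewrite ffunE muln0.
move=> a /andP[/forallP le_ac a_ne]; rewrite /Defs.one.
case: eqP => [rest0|_]; last by rewrite mulr0.
case/eqP: a_ne; apply/ffunP => i; rewrite ffunE; apply: val_inj.
rewrite /= inordK //; apply/eqP; rewrite eqn_leq le_ac.
by have := congr1 (fun x : mon n => x i) rest0; rewrite !ffunE => /eqP; rewrite subn_eq0.
Qed.

Lemma inR_inRA (K : fieldType) n (w : K) j (f : elt K n) :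
  inR w j f -> inRA w j f.
Proof.
move=> fR; exists 1%N, (fun _ => f), (fun _ => @Defs.one K n); split.
  by move=> k _; split; last exact: finsupp_one.
by move=> c; rewrite big_ord1 mul_one_r.
Qed.

Lemma prim_root_exp_solve (K : fieldType) n (w : K) i j :
  n.-primitive_root w -> (gcdn i n %| j)%N -> exists N, w ^+ (i * N) = w ^+ j.
Proof.
move=> hw dvd_j; case: (posnP i) => [i0|i_gt0].
  move: dvd_j; rewrite i0 gcd0n => /dvdnP[q ->].
  by exists 0%N; rewrite muln0 expr0 mulnC exprM (prim_expr_order hw) expr1n.
case: (egcdnP n i_gt0) => u v bezout _.
exists (u * (j %/ gcdn i n))%N.
rewrite mulnA [(i * u)%N]mulnC exprM bezout exprD [(v * _)%N]mulnC exprM.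
by rewrite (prim_expr_order hw) expr1n mul1r -exprM mulnC divnK.
Qed.

Theorem lemma5p4 (K : closedFieldType) (hK : [pchar K] =i pred0)
  (n : nat) (hn : (2 <= n)%N) (w : K) (hw : n.-primitive_root w)
  (j i : nat) (hjn : (j %| n)%N) (hj1 : (1 <= j)%N) (hj2 : (j <= n - 1)%N)
  (hi : (i <= n - 1)%N)
  (hgcd : (gcdn i n == gcdn i j) || (gcdn i n %| j)%N) :
  exists N : nat, @inRA K n w j (pw (@cc K n w i) N).
Proof.
case: n hn hw {hjn hj2 hi} hgcd => [//|m] _ hw hgcd.
have gcd_dvd_j : (gcdn i m.+1 %| j)%N.
  by case/orP: hgcd => [/eqP ->|//]; apply: dvdn_gcdr.
have [N wN] := prim_root_exp_solve hw gcd_dvd_j.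
exists N; apply: inR_inRA; split; first exact/finsupp_pw/finsupp_cc.
move=> c; rewrite (sigma_eigen_pw N (sigma_eigen_cc i hw)).
by rewrite exprVn -exprM wN.
Qed.
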